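(* Let $p$ be prime, $q$ a power of $p$, $R=\mathbb{F}_q[x^p]$, and $V=\{c':c\in\mathbb{F}_q[x]\}=R\oplus xR\oplus\cdots\oplus x^{p-2}R\subset\mathbb{F}_q[x]$ (a free $R$-module of rank $p-1$). For a nonzero squarefree $Q\in\mathbb{F}_q[x]$ let $\Lambda_Q=Q\mathbb{F}_q[x]\cap V$. Then $\Lambda_Q$ is an $R$-submodule of $V$ of index $[V:\Lambda_Q]=q^{\deg Q}$.
   Context: $c'$ denotes the formal derivative of $c\in\mathbb{F}_q[x]$. *)

From HB Require Import structures.
From mathcomp Require Import all_boot all_order all_algebra all_field.
Set Implicit Arguments. Unset Strict Implicit. Unset Printing Implicit Defensive.
Import GRing.Theory.
Local Open Scope ring_scope.

Section Defs.
Variable F : fieldType.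

(* R = F[x^p]: polynomials whose only nonzero coefficients are at multiples of p *)
Definition inR (p : nat) (r : {poly F}) : Prop :=
  forall i : nat, ~~ (p %| i)%N -> r`_i = 0.

Definition inV (v : {poly F}) : Prop := exists c : {poly F}, v = c^`().

Definition inLambda (Q v : {poly F}) : Prop := (Q %| v) /\ inV v.

Definition squarefree (Q : {poly F}) : Prop :=
  forall d : {poly F}, (d * d %| Q) -> (size d <= 1)%N.

Definition is_R_submodule_of_V (p : nat) (Q : {poly F}) : Prop :=
  [/\ (forall v, inLambda Q v -> inV v),
      inLambda Q 0,
      (forall v w, inLambda Q v -> inLambda Q w -> inLambda Q (v + w)),
      (forall v, inLambda Q v -> inLambda Q (- v)) &
      (forall r v, inR p r -> inLambda Q v -> inLambda Q (r * v))].

Definition index_in_V (Q : {poly F}) (n : nat) : Prop :=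
  exists s : seq {poly F},
    [/\ size s = n,
        (forall v, v \in s -> inV v),
        (forall i j, (i < n)%N -> (j < n)%N -> inLambda Q (s`_i - s`_j) -> i = j) &
        (forall v, inV v -> exists2 u, u \in s & inLambda Q (v - u))].
End Defs.

From HB Require Import structures.
From mathcomp Require Import all_boot all_order all_algebra all_field.
From mathcomp Require Import ring.
Import GRing.Theory.
Set Implicit Arguments. Unset Strict Implicit. Unset Printing Implicit Defensive.
Local Open Scope ring_scope.

(* The submodule part is bookkeeping: V is closed under sums and opposites
   because differentiation is additive, and under multiplication by
   r in R = F[x^p] because r' = 0, so (r c)' = r c'.

   For the index we show that the reduction map V -> F[x]/(Q) is onto.  Its
   kernel is Lambda_Q, so [V : Lambda_Q] = #|F[x]/(Q)| = q^(deg Q).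
   Surjectivity comes from separability: over the perfect field F, a
   polynomial with zero derivative is a p-th power, so a squarefree Q is
   coprime to Q'.  A Bezout relation a Q + b Q' = 1 then shows that
   (Q b f)' = f + Q ((b f)' - a f) lifts any residue f into V.
   Concretely, the lifts of the polynomials of degree < deg Q (the finite
   type {poly_(deg Q) F}) form the required system of coset representatives. *)

Section AdditiveV.
Variable F : fieldType.

Lemma inV0 : inV (0 : {poly F}).
Proof. by exists 0; rewrite deriv0. Qed.

Lemma inVD (v w : {poly F}) : inV v -> inV w -> inV (v + w).
Proof. by move=> [c ->] [d ->]; exists (c + d); rewrite derivD. Qed.

Lemma inVN (v : {poly F}) : inV v -> inV (- v).
Proof. by move=> [c ->]; exists (- c); rewrite derivN. Qed.

End AdditiveV.

Section SubmoduleOfV.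
Variables (F : fieldType) (p : nat).
Hypothesis pcharFp : p \in [pchar F].

Lemma inR_deriv (r : {poly F}) : inR p r -> r^`() = 0.
Proof.
move=> Rr; apply/polyP => i; rewrite coef_deriv coef0.
have [p_dvd | p_ndvd] := boolP (p %| i.+1)%N; last by rewrite Rr // mul0rn.
by rewrite -mulr_natr; move: p_dvd; rewrite (dvdn_pcharf pcharFp) => /eqP ->; rewrite mulr0.
Qed.

Lemma inVM (r v : {poly F}) : inR p r -> inV v -> inV (r * v).
Proof. by move=> Rr [c ->]; exists (r * c); rewrite derivM (inR_deriv Rr) mul0r add0r. Qed.

Lemma Lambda_R_submodule (Q : {poly F}) : is_R_submodule_of_V p Q.
Proof.
split.
- by move=> v [].
- by split; [exact: dvdp0 | exact: inV0].
- by move=> v w [Qv Vv] [Qw Vw]; split; [exact: dvdp_add | exact: inVD].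
- by move=> v [Qv Vv]; split; [rewrite dvdpNr | exact: inVN].
- by move=> r v Rr [Qv Vv]; split; [exact: dvdp_mull | exact: inVM].
Qed.

End SubmoduleOfV.

Section FreshmanDream.
Variables (F : fieldType) (p : nat).
Hypothesis pcharFp : p \in [pchar F].

Lemma exp_pchar_comp (h : {poly F}) :
  h ^+ p = (map_poly (pFrobenius_aut pcharFp) h) \Po 'X^p.
Proof.
have pcharPp : p \in [pchar {poly F}] by rewrite pchar_poly.
elim/poly_ind: h => [|h c IHh].
  by rewrite rmorph0 comp_poly0 expr0n /= gtn_eqF // prime_gt0 // (pcharf_prime pcharFp).
rewrite -(pFrobenius_autE pcharPp) rmorphD rmorphM /= !pFrobenius_autE IHh.
rewrite rmorphD rmorphM /= map_polyX map_polyC comp_polyD comp_polyM comp_polyX comp_polyC.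
by rewrite rmorphXn.
Qed.

End FreshmanDream.

Section Separability.
Variables (F : finFieldType) (p : nat).
Hypothesis pcharFp : p \in [pchar F].

(* F is perfect: a polynomial with zero derivative is a p-th power.  Its
   p-th root takes the p-th roots of the coefficients at multiples of p. *)
Lemma deriv_eq0_pth_power (u : {poly F}) : u^`() = 0 -> exists h : {poly F}, u = h ^+ p.
Proof.
move=> du0; have p_gt0 := prime_gt0 (pcharf_prime pcharFp).
have [root_p _ root_pK] := injF_bij (fmorph_inj (pFrobenius_aut pcharFp)).
exists (\poly_(i < size u) root_p u`_(i * p)).
rewrite (exp_pchar_comp pcharFp); apply/polyP => k; rewrite coef_comp_poly_Xn //.
have [/dvdnP[j ->] | p_ndvd_k] := boolP (p %| k)%N.
  rewrite mulnK // coef_map coef_poly /=.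
  have [j_lt | j_ge] := ltnP j (size u); first by rewrite root_pK.
  by rewrite rmorph0 nth_default // (leq_trans j_ge) // leq_pmulr.
case: k p_ndvd_k => [|k] p_ndvd_k; first by rewrite dvdn0 in p_ndvd_k.
apply/eqP; have /eqP := congr1 (fun w : {poly F} => w`_k) du0.
by rewrite coef_deriv coef0 -mulr_natr mulf_eq0 -(dvdn_pcharf pcharFp) (negbTE p_ndvd_k) orbF.
Qed.

Lemma squarefree_separable (Q : {poly F}) :
  Q != 0 -> squarefree Q -> separable_poly Q.
Proof.
move=> Q_neq0 Q_sqf; apply/separable_polyP; split.
  apply/poly_square_freeP => u u_nconst; apply/negP => u2_dvd_Q.
  have := Q_sqf u; rewrite -expr2 => /(_ u2_dvd_Q).
  rewrite leq_eqVlt (negbTE u_nconst) ltnS leqn0 size_poly_eq0 => /eqP u0.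
  by move: u2_dvd_Q Q_neq0; rewrite u0 expr0n /= dvd0p => ->.
move=> u u_dvd_Q u_nconst; apply/negP => /eqP /deriv_eq0_pth_power [h uE].
have hh_dvd_Q : h * h %| Q.
  by apply: dvdp_trans u_dvd_Q; rewrite uE -expr2 dvdp_exp2l // prime_gt1 // (pcharf_prime pcharFp).
have h_const := size1_polyC (Q_sqf _ hh_dvd_Q).
by move: u_nconst; rewrite uE h_const -rmorphXn ltnNge size_polyC_leq1.
Qed.

End Separability.

Section Residues.
Variable F : fieldType.

(* If Q is coprime to Q', every residue class mod Q meets V:
   with a Q + b Q' = 1, the derivative (Q b f)' is congruent to f mod Q. *)
Lemma separable_lift_into_V (Q : {poly F}) :
  separable_poly Q ->
  exists lift : {poly F} -> {poly F},
    (forall f, inV (lift f)) /\ (forall f, Q %| lift f - f).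
Proof.
rewrite unlock => /Bezout_eq1_coprimepP [[a b] /= bezout].
exists (fun f => (Q * (b * f))^`()); split => [f | f]; first by exists (Q * (b * f)).
have -> : (Q * (b * f))^`() - f = Q * ((b * f)^`() - a * f).
  by rewrite derivM -[f in _ - f]mul1r -bezout; ring.
exact: dvdp_mulIl.
Qed.

Lemma dvdp_small_eq (Q a b : {poly F}) :
  (size a < size Q)%N -> (size b < size Q)%N -> Q %| a - b -> a = b.
Proof.
move=> a_small b_small; apply: contraTeq; rewrite -subr_eq0 => ab_neq0.
rewrite gtNdvdp // (leq_ltn_trans (size_polyD _ _)) // size_polyN.
by rewrite gtn_max a_small.
Qed.

End Residues.

Section Index.
Variable F : finFieldType.

Lemma index_from_lift (Q : {poly F}) (lift : {poly F} -> {poly F}) :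
  Q != 0 -> (forall f, inV (lift f)) -> (forall f, Q %| lift f - f) ->
  index_in_V Q (#|F| ^ (size Q).-1)%N.
Proof.
move=> Q_neq0 liftV liftQ; set m := (size Q).-1.
have sizeQ : size Q = m.+1 by rewrite prednK // size_poly_gt0.
have small (g : {poly_m F}) : (size (val g) < size Q)%N by rewrite sizeQ ltnS size_npoly.
pose reps := enum {: {poly_m F}}.
have size_reps : size reps = (#|F| ^ m)%N by rewrite -cardE card_npoly.
have lift_congr f g : inLambda Q (lift f - lift g) -> Q %| f - g.
  case=> Q_dvd _; have -> : f - g = (lift f - lift g) - (lift f - f) + (lift g - g) by ring.
  by rewrite dvdp_add // dvdp_sub.
exists [seq lift (val g) | g <- reps]; split.
- by rewrite size_map.
- by move=> v /mapP [g _ ->].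
- move=> i j; rewrite -size_reps => i_lt j_lt.
  rewrite (nth_map 0 _ _ i_lt) (nth_map 0 _ _ j_lt).
  move/lift_congr/dvdp_small_eq => /(_ (small _) (small _)) /val_inj eq_ij.
  by apply/eqP; rewrite -(nth_uniq 0 i_lt j_lt) ?enum_uniq ?eq_ij.
- move=> v Vv; set f := v %% Q.
  have f_small : (size f <= m)%N by rewrite -ltnS -sizeQ ltn_modp.
  exists (lift f).
    apply/mapP; exists (npolyp m f); first by rewrite /reps mem_enum.
    by congr (lift _); symmetry; exact: npolypK.
  split; last by apply: inVD => //; apply: inVN.
  have -> : v - lift f = (v %/ Q) * Q - (lift f - f) by rewrite {1}(divp_eq v Q); ring.
  by rewrite dvdp_sub ?dvdp_mull.
Qed.

End Index.

Theorem mainTheorem16 (p : nat) (F : finFieldType) (hp : prime p)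
  (hchar : p \in [pchar F]) (Q : {poly F}) (hQ0 : Q != 0)
  (hQsf : squarefree Q) :
  is_R_submodule_of_V p Q /\ index_in_V Q (#|F| ^ (size Q).-1)%N.
Proof.
split; first exact: Lambda_R_submodule.
have [lift [liftV liftQ]] := separable_lift_into_V (squarefree_separable hchar hQ0 hQsf).
exact: index_from_lift liftV liftQ.
Qed.
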